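(* Let $G$ be a finite simple graph and let $P$ be a solvable pebble distribution on $G$. Then $$\sum_{v\in V(G)}\mathrm{ef}(v)P(v)\geq |V(G)|+\mathrm{TE}(P).$$
   Context: A pebble distribution on $G$ is a function $P:V(G)\to\mathbb{Z}_{\geq 0}$. A pebbling move from a vertex $u$ with at least two pebbles to an adjacent vertex $v$ removes two pebbles from $u$ and adds one to $v$. A vertex $v$ is $k$-reachable under $P$ if some executable sequence of pebbling moves (never making a pebble count negative) yields a distribution with at least $k$ pebbles on $v$; reachable means $1$-reachable. $P$ is solvable if every vertex is reachable. $\mathrm{reach}(P,v)$ is the largest $k$ such that $v$ is $k$-reachable under $P$. The excess $\mathrm{exc}(P,v)$ is $\mathrm{reach}(P,v)-1$ if $v$ is reachable and $0$ otherwise; the total excess is $\mathrm{TE}(P)=\sum_{v\in V(G)}\mathrm{exc}(P,v)$. For a vertex $v$, $N_i(v)$ is the set of vertices at distance exactly $i$ from $v$, and the effect of $v$ is $\mathrm{ef}(v)=\sum_{i\geq 0}(1/2)^i|N_i(v)|$. *)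

From mathcomp Require Import all_boot all_order all_algebra.
From Stdlib Require Import Relations ClassicalEpsilon.
Set Implicit Arguments. Unset Strict Implicit. Unset Printing Implicit Defensive.
Import Order.TTheory GRing.Theory Num.Theory.

Definition simple_graph (T : finType) (e : rel T) : Prop :=
  (forall x y, e x y = e y x) /\ (forall x, e x x = false).

Definition pebbling_move (T : finType) (e : rel T) (P Q : {ffun T -> nat}) : Prop :=
  exists u v, e u v /\ 2 <= P u /\
    Q = [ffun x => P x - (x == u) * 2 + (x == v)].

Definition pebble_reach (T : finType) (e : rel T) : relation {ffun T -> nat} :=
  clos_refl_trans _ (@pebbling_move T e).

Definition kreachable (T : finType) (e : rel T) (P : {ffun T -> nat}) (v : T) (k : nat) : Prop :=
  exists Q, pebble_reach e P Q /\ k <= Q v.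

Definition reachable (T : finType) (e : rel T) (P : {ffun T -> nat}) (v : T) : Prop :=
  kreachable e P v 1.

Definition solvable (T : finType) (e : rel T) (P : {ffun T -> nat}) : Prop :=
  forall v, reachable e P v.

Definition asb (A : Prop) : bool :=
  if excluded_middle_informative A then true else false.

(* Moves never
   increase the total number of pebbles, so any such k is at most the total
   number of pebbles \sum_x P x; the max is therefore taken over that range. *)
Definition reach (T : finType) (e : rel T) (P : {ffun T -> nat}) (v : T) : nat :=
  \max_(k < (\sum_x P x).+1 | asb (kreachable e P v k)) (k : nat).

Definition exc (T : finType) (e : rel T) (P : {ffun T -> nat}) (v : T) : nat :=
  if asb (reachable e P v) then reach e P v - 1 else 0.

Definition total_excess (T : finType) (e : rel T) (P : {ffun T -> nat}) : nat :=
  \sum_v exc e P v.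

Fixpoint ball (T : finType) (e : rel T) (v : T) (i : nat) : {set T} :=
  match i with
  | 0 => [set v]
  | i'.+1 => ball e v i' :|: [set y | [exists x in ball e v i', e x y]]
  end.

Definition sphere (T : finType) (e : rel T) (v : T) (i : nat) : {set T} :=
  match i with
  | 0 => [set v]
  | i'.+1 => ball e v i'.+1 :\: ball e v i'
  end.

(* ef(v) = \sum_{i >= 0} (1/2)^i |N_i(v)|; distances are < #|T|, so
   N_i(v) is empty for i >= #|T| and the sum is over i < #|T|. *)
Definition effect (T : finType) (e : rel T) (v : T) : rat :=
  \sum_(i < #|T|) (2%:R ^- i : rat) * (#|sphere e v i|)%:R.

From mathcomp Require Import all_boot all_order all_algebra.
From mathcomp Require Import lra.
From Stdlib Require Import ClassicalEpsilon.
Import Order.TTheory GRing.Theory Num.Theory.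
Local Open Scope ring_scope.
Set Implicit Arguments. Unset Strict Implicit. Unset Printing Implicit Defensive.

(* Fix a target vertex r and weigh each pebble on x by 2^-d(x,r).  A move from
   u to an adjacent v spends weight 2 * 2^-d(u,r) >= 2^-d(v,r), so the total
   weight of a distribution never increases along pebbling moves, and it is at
   least the number of pebbles on r.  Hence reach(P,r) is bounded by the weight
   of P, and as P is solvable, 1 + exc(P,r) = reach(P,r) for every r.  Summing
   over r and exchanging the sums, the weight of P summed over all targets is
   sum_x P(x) sum_r 2^-d(x,r) = sum_x P(x) ef(x).  The argument never uses
   that the graph is simple: it holds for any edge relation. *)

Section Potential.
Variables (T : finType) (e : rel T).

Lemma ballS x i :
  ball e x i.+1 = ball e x i :|: [set y | [exists z in ball e x i, e z y]].
Proof. by []. Qed.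

Lemma subset_ball x i j : (i <= j)%N -> ball e x i \subset ball e x j.
Proof.
move=> /subnK <-; elim: (j - i)%N => [|k IHk]; first by rewrite add0n.
by rewrite addSn ballS; apply: subset_trans IHk (subsetUl _ _).
Qed.

Lemma ball_edge u v r i : e u v -> r \in ball e v i -> r \in ball e u i.+1.
Proof.
move=> euv; elim: i r => [|i IHi] r.
  rewrite [ball e v 0]/= in_set1 => /eqP ->.
  rewrite ballS in_setU in_set; apply/orP; right.
  by apply/existsP; exists u; rewrite in_set1 eqxx.
rewrite [ball e v _]ballS in_setU in_set.
case/orP => [/IHi ru | /existsP [z /andP [zi ezr]]].
  by rewrite ballS in_setU ru.
rewrite ballS in_setU in_set; apply/orP; right.
by apply/existsP; exists z; rewrite IHi.
Qed.

Lemma ball_stable x k :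
  ball e x k = ball e x k.+1 -> forall m, ball e x (k + m) = ball e x k.
Proof.
move=> Ek; elim=> [|m IHm]; first by rewrite addn0.
by rewrite addnS ballS IHm -ballS -Ek.
Qed.

Lemma card_ball_gt x m :
  (forall k, (k < m)%N -> ball e x k != ball e x k.+1) -> (m < #|ball e x m|)%N.
Proof.
elim: m => [|m IHm] grow; first by rewrite /= cards1.
apply: leq_ltn_trans (IHm (fun k lt_km => grow k (leqW lt_km))) _.
by apply: proper_card; rewrite properEneq grow //= subsetUl.
Qed.

Lemma subset_ball_card x k : ball e x k \subset ball e x #|T|.-1.
Proof.
have T_gt0 : (0 < #|T|)%N by apply/card_gt0P; exists x.
have [le_k | lt_k] := leqP k #|T|.-1; first exact: subset_ball.
have [/existsP [j /eqP Ej] | ] := boolP [exists j : 'I_#|T|, ball e x j == ball e x j.+1].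
  have le_j : (j <= #|T|.-1)%N by rewrite -ltnS prednK.
  rewrite -(subnKC (leq_trans le_j (ltnW lt_k))) ball_stable //.
  exact: subset_ball.
rewrite negb_exists => /forallP grow.
have : (#|T| < #|ball e x #|T| |)%N.
  by apply: card_ball_gt => j lt_j; apply: (grow (Ordinal lt_j)).
by rewrite ltnNge max_card.
Qed.

Lemma sphere_subset_ball x i : sphere e x i \subset ball e x i.
Proof. by case: i => [|i] //=; apply: subsetDl. Qed.

Lemma sphere_inj x r i j : r \in sphere e x i -> r \in sphere e x j -> i = j.
Proof.
wlog le_ij : i j / (i <= j)%N.
  move=> W ri rj; have [le_ij | /ltnW le_ji] := leqP i j; first exact: W.
  exact/esym/W.
move=> ri; case: j le_ij => [|j] le_ij; first by move=> _; apply/eqP; rewrite -leqn0.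
rewrite in_setD => /andP [rNj _]; apply/eqP; rewrite eqn_leq le_ij leqNgt.
apply: contra rNj => le_ij'; apply: (subsetP (subset_ball x (le_ij' : i <= j)%N)).
exact: (subsetP (sphere_subset_ball x i)).
Qed.

Lemma ball_sphere x r k :
  r \in ball e x k -> exists2 i, (i <= k)%N & r \in sphere e x i.
Proof.
elim: k => [|k IHk] rk; first by exists 0%N.
have [/IHk [i le_ik ri] | rNk] := boolP (r \in ball e x k).
  by exists i; first exact: leqW.
by exists k.+1 => //; rewrite /= inE rNk rk.
Qed.

(* 2^-d(x,r), and 0 when r cannot be reached from x. *)
Definition dist_weight x r : rat :=
  \sum_(i < #|T|) 2%:R ^- i * (r \in sphere e x i)%:R.

Lemma dist_weight_ge0 x r : 0 <= dist_weight x r.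
Proof. by apply: sumr_ge0 => i _; rewrite mulr_ge0 ?invr_ge0 ?exprn_ge0 ?ler0n. Qed.

Lemma dist_weight_sphere x r i :
  r \in sphere e x i -> (i < #|T|)%N -> dist_weight x r = 2%:R ^- i.
Proof.
move=> ri lt_i; rewrite /dist_weight (bigD1 (Ordinal lt_i)) //= ri mulr1.
rewrite big1 ?addr0 // => j.
have [rj | _] := boolP (r \in sphere e x j); last by rewrite mulr0.
by rewrite -val_eqE /= (sphere_inj rj ri) eqxx.
Qed.

Lemma dist_weight_ball x r k : r \in ball e x k -> 2%:R ^- k <= dist_weight x r.
Proof.
have T_gt0 : (0 < #|T|)%N by apply/card_gt0P; exists x.
move=> rk; have r_card := subsetP (subset_ball_card x k) r rk.
have [i le_ik ri] := ball_sphere rk; have [j le_jT rj] := ball_sphere r_card.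
rewrite (dist_weight_sphere rj) ?(leq_ltn_trans le_jT) ?prednK //.
by rewrite (sphere_inj rj ri) -!exprVn ler_wiXn2l ?invr_ge0 ?ler0n ?invf_le1 ?ltr0n ?ler1n.
Qed.

Lemma dist_weight_edge u v r : e u v -> dist_weight v r <= 2%:R * dist_weight u r.
Proof.
move=> euv.
have [/existsP [[i lt_i] /= ri] | ] := boolP [exists i : 'I_#|T|, r \in sphere e v i].
  have ru : r \in ball e u i.+1.
    by apply: ball_edge euv _; apply: subsetP (sphere_subset_ball v i) r ri.
  rewrite (dist_weight_sphere ri lt_i).
  apply: le_trans (ler_wpM2l _ (dist_weight_ball ru)) => //.
  by rewrite exprS invfM mulrA mulfV ?mul1r ?pnatr_eq0.
rewrite negb_exists => /forallP rN.
rewrite /dist_weight big1 ?mulr_ge0 ?ler0n ?dist_weight_ge0 // => i _.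
by rewrite (negbTE (rN i)) mulr0.
Qed.

Definition potential r (Q : {ffun T -> nat}) : rat :=
  \sum_x (Q x)%:R * dist_weight x r.

Lemma potential_move r P Q : pebbling_move e P Q -> potential r Q <= potential r P.
Proof.
move=> [u [v [euv [P_u ->]]]].
have sum_at (f : T -> rat) w : \sum_x (x == w)%:R * f x = f w.
  rewrite (bigD1 w) //= eqxx mul1r big1 ?addr0 // => x /negbTE ->.
  by rewrite mul0r.
have moveE x : ([ffun x => (P x - (x == u) * 2 + (x == v))%N] x)%:R =
   (P x)%:R - (x == u)%:R * 2%:R + (x == v)%:R :> rat.
  rewrite ffunE natrD natrB ?natrM //.
  by case: (eqVneq x u) => [->|] //=; rewrite mul1n.
rewrite /potential; under eq_bigr => x _ do rewrite moveE mulrDl mulrBl.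
rewrite big_split /= sumrB.
under [X in _ - X + _ <= _]eq_bigr => x _ do rewrite mulrAC.
rewrite -[X in _ - X + _ <= _]mulr_suml !sum_at.
have := dist_weight_edge r euv; lra.
Qed.

Lemma potential_reach r P Q : pebble_reach e P Q -> potential r Q <= potential r P.
Proof.
elim=> [P1 Q1 | // | P1 Q1 R1 _ le_QP _ le_RQ]; first exact: potential_move.
exact: le_trans le_RQ le_QP.
Qed.

Lemma pebbles_le_potential r (Q : {ffun T -> nat}) : (Q r)%:R <= potential r Q.
Proof.
have r_ball : r \in ball e r 0 by rewrite /= in_set1.
have rest_ge0 : 0 <= \sum_(x | x != r) (Q x)%:R * dist_weight x r.
  by apply: sumr_ge0 => x _; rewrite mulr_ge0 ?ler0n ?dist_weight_ge0.
rewrite /potential (bigD1 r) //= -[leLHS]addr0 lerD //.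
by rewrite -[leLHS]mulr1 ler_wpM2l // (le_trans _ (dist_weight_ball r_ball)) ?expr0 ?invr1.
Qed.

Lemma kreachable_le_potential P r k : kreachable e P r k -> k%:R <= potential r P.
Proof.
move=> [Q [PQ le_k]]; apply: le_trans (potential_reach r PQ).
by apply: le_trans (pebbles_le_potential r Q); rewrite ler_nat.
Qed.

Lemma asbP (A : Prop) : asb A = true <-> A.
Proof. by rewrite /asb; case: excluded_middle_informative. Qed.

Lemma exc_le_potential P r : reachable e P r -> 1 + (exc e P r)%:R <= potential r P.
Proof.
move=> Pr; rewrite /exc (proj2 (asbP _) Pr).
have one_le := kreachable_le_potential Pr.
have : (reach e P r)%:R <= potential r P.
  apply: (big_ind (fun m : nat => m%:R <= potential r P)).
  - exact: le_trans (ler0n _ _) one_le.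
  - by move=> a b ? ?; rewrite /maxn; case: ifP.
  - by move=> k /asbP; apply: kreachable_le_potential.
case: (reach e P r) => [|m] le_m; first by rewrite sub0n mulr0n addr0.
by rewrite subn1 /= addrC natr1.
Qed.

Lemma sum_dist_weight x : \sum_r dist_weight x r = effect e x.
Proof.
rewrite /effect exchange_big /=; apply: eq_bigr => i _.
rewrite -mulr_sumr -[#|sphere e x i|]sum1_card natr_sum; congr (_ * _).
rewrite [RHS]big_mkcond.
by apply: eq_bigr => r _; case: (r \in _).
Qed.

End Potential.

Unset Implicit Arguments.

Theorem theorem2p1 (T : finType) (e : rel T) (P : {ffun T -> nat}) :
  simple_graph e -> solvable e P ->
  (#|T|%:R + (total_excess e P)%:R : rat) <= \sum_(v : T) effect e v * (P v)%:R.
Proof.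
move=> _ P_solvable.
have -> : #|T|%:R + (total_excess e P)%:R = \sum_v (1 + (exc e P v)%:R) :> rat.
  by rewrite big_split /= natr_sum sumr_const cardT -cardE.
apply: le_trans (ler_sum _ (fun v _ => exc_le_potential (P_solvable v))) _.
rewrite /potential exchange_big /=; apply: ler_sum => x _.
by rewrite -mulr_sumr sum_dist_weight mulrC.
Qed.
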